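(* Let $\mathbb{F}$ be a field, let $A$ be a finite set equipped with a linear ordering $\preceq$, and let $k\ge 2$ be an integer. Let $f:A^k\to\mathbb{F}$ be a function such that $f(x_1,x_2,\ldots,x_k)\neq 0$ implies $x_1\preceq x_i\preceq x_k$ for all $i=1,2,\ldots,k$. Then the slice rank of $f$ is at least \[\bigl|\{x\in A: f(x,x,\ldots,x)\neq 0\}\bigr|.\]
   Context: A function $g:A^k\to\mathbb{F}$ is called a slice if it can be written as $g(x_1,\ldots,x_k)=h(x_i)\,g'(x_1,\ldots,x_{i-1},x_{i+1},\ldots,x_k)$ for some $1\le i\le k$ and some functions $h:A\to\mathbb{F}$ and $g':A^{k-1}\to\mathbb{F}$. The slice rank of a function $f:A^k\to\mathbb{F}$ is the minimum number $r$ such that $f$ can be written as a sum of $r$ slices. (For $k=2$ this is the usual matrix rank.) *)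

From HB Require Import structures.
From mathcomp Require Import all_boot all_order all_algebra.
Set Implicit Arguments. Unset Strict Implicit. Unset Printing Implicit Defensive.
Import Order.TTheory GRing.Theory.
Local Open Scope ring_scope.

(* x with its i-th coordinate removed: the point of A^(k-1)
   (x_1,...,x_{i-1},x_{i+1},...,x_k). The default i in insubd is never used
   since bump i j < k whenever j < k-1 and i < k. *)
Definition drop_coord (A : finType) (k : nat) (i : 'I_k)
    (x : {ffun 'I_k -> A}) : {ffun 'I_k.-1 -> A} :=
  [ffun j : 'I_k.-1 => x (insubd i (bump i j))].

Definition is_slice (F : fieldType) (A : finType) (k : nat)
    (g : {ffun 'I_k -> A} -> F) : Prop :=
  exists (i : 'I_k) (h : A -> F) (g' : {ffun 'I_k.-1 -> A} -> F),
    forall x, g x = h (x i) * g' (drop_coord i x).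

Definition slice_decomp (F : fieldType) (A : finType) (k : nat)
    (f : {ffun 'I_k -> A} -> F) (r : nat) : Prop :=
  exists gs : 'I_r -> ({ffun 'I_k -> A} -> F),
    (forall j, is_slice (gs j)) /\ (forall x, f x = \sum_(j < r) gs j x).

Definition slice_rank_ge (F : fieldType) (A : finType) (k : nat)
    (f : {ffun 'I_k -> A} -> F) (N : nat) : Prop :=
  forall r, slice_decomp f r -> (N <= r)%N.

From mathcomp Require Import all_boot all_order all_algebra.
Set Implicit Arguments. Unset Strict Implicit. Unset Printing Implicit Defensive.
Import Order.TTheory GRing.Theory.
Local Open Scope ring_scope.

(* Suppose f is a sum of r slices, r_i of which split off coordinate i through
   functions h_j : A -> F. Triangular elimination along the order produces a set
   B_i of at most r_i points such that every a outside B_i is the leading point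
   of a vector v_i orthogonal to all these h_j: v_i(a) = 1 and v_i is supported
   on the points >= a (on the points <= a when i is the last coordinate). If
   f(a,...,a) <> 0 held for more than r points, some such a would avoid every
   B_i. Pairing f with v_1 (x) ... (x) v_k kills every slice, while the support
   hypothesis on f leaves only the diagonal point, so f(a,...,a) = 0. *)

Lemma card_bigcup_le (T I : finType) (B : I -> {set T}) :
  (#|\bigcup_i B i| <= \sum_i #|B i|)%N.
Proof.
elim/big_rec2: _ => [|i U n _ IH]; first by rewrite cards0.
exact: leq_trans (leq_card_setU _ _).1 (leq_add (leqnn _) IH).
Qed.

Lemma slice_decomp_sum (F : fieldType) (A : finType) k
    (f : {ffun 'I_k -> A} -> F) r :
  slice_decomp f r ->
  exists (ic : 'I_r -> 'I_k) (hh : 'I_r -> A -> F)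
         (gg : 'I_r -> {ffun 'I_k.-1 -> A} -> F),
    forall x, f x = \sum_j hh j (x (ic j)) * gg j (drop_coord (ic j) x).
Proof.
case=> gs [gs_slice f_sum].
have /fin_all_exists[t t_spec] : forall j,
    exists t : 'I_k * (A -> F) * ({ffun 'I_k.-1 -> A} -> F),
    forall x, gs j x = t.1.2 (x t.1.1) * t.2 (drop_coord t.1.1 x).
  by move=> j; have [i [h [g gs_j]]] := gs_slice j; exists (i, h, g).
exists (fun j => (t j).1.1), (fun j => (t j).1.2), (fun j => (t j).2) => x.
by rewrite f_sum; apply: eq_bigr => j _; rewrite t_spec.
Qed.

Section SplitCoord.
Variables (A : finType) (k : nat).

(* The cast gives the index type as 'I_k rather than 'I_k.+1.-1, which rewriting
   needs to match. *)
Lemma drop_coordE (i : 'I_k.+1) (x : {ffun 'I_k.+1 -> A}) (j : 'I_k) :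
  (drop_coord i x : {ffun 'I_k -> A}) j = x (lift i j).
Proof.
by rewrite ffunE; congr (x _); apply: val_inj; rewrite val_insubd (ltn_ord (lift i j)).
Qed.

Lemma sum_split_coord (R : nmodType) (i : 'I_k.+1)
    (G : A -> {ffun 'I_k -> A} -> R) :
  \sum_(x : {ffun 'I_k.+1 -> A}) G (x i) (drop_coord i x)
    = \sum_c \sum_(y : {ffun 'I_k -> A}) G c y.
Proof.
pose split (x : {ffun 'I_k.+1 -> A}) := (x i, drop_coord i x).
pose merge (p : A * {ffun 'I_k -> A}) : {ffun 'I_k.+1 -> A} :=
  [ffun l => if unlift i l is Some j then p.2 j else p.1].
have splitK : cancel split merge.
  move=> x; apply/ffunP => l; rewrite ffunE.
  by case: unliftP => [j ->|->] //=; rewrite drop_coordE.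
have mergeK : cancel merge split.
  move=> [c y]; rewrite /split /merge ffunE unlift_none; congr pair.
  by apply/ffunP => j; rewrite drop_coordE ffunE liftK.
by rewrite pair_big [RHS](reindex split) //; apply: onW_bij; exists merge.
Qed.

Lemma prod_split_coord (R : comPzSemiRingType) (i : 'I_k.+1)
    (v : 'I_k.+1 -> A -> R) (x : {ffun 'I_k.+1 -> A}) :
  \prod_l v l (x l) = v i (x i) * \prod_j v (lift i j) (drop_coord i x j).
Proof.
rewrite (bigD1_ord i) //=; congr (_ * _).
by apply: eq_bigr => j _; rewrite drop_coordE.
Qed.

End SplitCoord.

Section LeadAnnihilator.
Variables (F : fieldType) (A : finType) (le : rel A).
Hypotheses (le_tr : transitive le) (le_asym : antisymmetric le).
Hypothesis le_tot : total le.

Definition dot (u v : A -> F) := \sum_b u b * v b.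

Definition annihilates (hs : seq (A -> F)) (v : A -> F) :=
  all (fun h => dot v h == 0) hs.

Definition lead_annihilator (hs : seq (A -> F)) (a : A) (v : A -> F) :=
  [/\ v a = 1, forall b, v b != 0 -> le a b & annihilates hs v].

Lemma annihilates_cons h hs v :
  annihilates (h :: hs) v = (dot v h == 0) && annihilates hs v.
Proof. by []. Qed.

Lemma annihilates_map (I : eqType) (hh : I -> A -> F) (s : seq I) v j :
  annihilates (map hh s) v -> j \in s -> dot v (hh j) = 0.
Proof. by rewrite /annihilates all_map => /allP/(_ j) ann /ann/eqP. Qed.

Let le_rfl : reflexive le. Proof. by move=> a; case/orP: (le_tot a a). Qed.

Lemma dot_subl u u0 c h :
  dot (fun b => u b - c * u0 b) h = dot u h - c * dot u0 h.
Proof.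
by rewrite /dot mulr_sumr -sumrB; apply: eq_bigr => b _; rewrite mulrBl mulrA.
Qed.

Lemma lead_annihilator_sub h hs a a0 u u0 :
    lead_annihilator hs a u -> lead_annihilator hs a0 u0 ->
    le a a0 -> a != a0 -> dot u0 h != 0 ->
  lead_annihilator (h :: hs) a (fun b => u b - dot u h / dot u0 h * u0 b).
Proof.
move=> [u_a u_supp u_ann] [_ u0_supp u0_ann] le_a_a0 a_neq_a0 u0h_nz.
have u0_a : u0 a = 0.
  by apply: contraNeq a_neq_a0 => /u0_supp le_a0_a; apply/eqP/le_asym/andP.
split.
- by rewrite u0_a mulr0 subr0.
- move=> b; have [->|/u0_supp le_a0_b _] := eqVneq (u0 b) 0.
    by rewrite mulr0 subr0 => /u_supp.
  exact: le_tr le_a_a0 le_a0_b.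
- rewrite annihilates_cons dot_subl divfK // subrr eqxx /=.
  have : all (predI (fun h => dot u h == 0) (fun h => dot u0 h == 0)) hs.
    by rewrite all_predI; apply/andP.
  apply: sub_all => g /andP[/eqP ug /eqP u0g].
  by rewrite /= dot_subl ug u0g mulr0 subr0.
Qed.

(* When h is added, every w a with dot (w a) h <> 0 is corrected by the one
   whose leading point m is largest, and m is the only point added to B. *)
Lemma exists_lead_annihilators hs :
  exists (B : {set A}) (w : A -> A -> F),
    (#|B| <= size hs)%N /\ {in ~: B, forall a, lead_annihilator hs a (w a)}.
Proof.
elim: hs => [|h hs [B [w [card_B lead_w]]]].
  exists set0, (fun a b => if b == a then 1 else 0).
  split=> [|a _]; first by rewrite cards0.
  split=> [|b|//]; first by rewrite eqxx.
  by case: ifP => [/eqP-> _|_]; [exact: le_rfl | rewrite eqxx].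
pose C := [set a in ~: B | dot (w a) h != 0].
have [C0|[m0 m0C]] := set_0Vmem C.
  exists B, w; split=> [|a aB]; first exact: leqW.
  have [w_a w_supp w_ann] := lead_w a aB.
  split=> //; rewrite annihilates_cons w_ann andbT.
  by apply: contraT => wh_nz; rewrite -(in_set0 a) -C0 inE aB.
have [m /setIdP[mB wmh_nz] m_max] :=
  @extremumP _ _ (fun x y => le y x) m0 (fun x => x \in C) id le_rfl
    (fun y x z hxy hyz => le_tr hyz hxy) (fun x y => le_tot y x) m0C.
pose w' a := if dot (w a) h == 0 then w a
             else (fun b => w a b - dot (w a) h / dot (w m) h * w m b).
exists (m |: B), w'; split=> [|a].
  by rewrite cardsU1 -in_setC mB add1n ltnS.
rewrite !inE negb_or => /andP[a_neq_m aB].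
have aB' : a \in ~: B by rewrite inE.
rewrite /w'; case: eqP => [wah0|/eqP wah_nz].
  have [w_a w_supp w_ann] := lead_w a aB'.
  by split=> //; rewrite annihilates_cons wah0 eqxx.
apply: lead_annihilator_sub (lead_w a aB') (lead_w m mB) _ a_neq_m wmh_nz.
by apply: (m_max a); rewrite inE aB' wah_nz.
Qed.

End LeadAnnihilator.

Section Contraction.
Variables (F : fieldType) (A : finType) (k : nat).
Implicit Types (v : 'I_k.+1 -> A -> F) (g : {ffun 'I_k.+1 -> A} -> F).

Definition contract v g :=
  \sum_(x : {ffun 'I_k.+1 -> A}) (\prod_l v l (x l)) * g x.

Lemma eq_contract v g1 g2 : g1 =1 g2 -> contract v g1 = contract v g2.
Proof. by move=> eq_g; apply: eq_bigr => x _; rewrite eq_g. Qed.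

Lemma contract_slice_eq0 v (i : 'I_k.+1) (h : A -> F)
    (g : {ffun 'I_k -> A} -> F) :
  dot (v i) h = 0 -> contract v (fun x => h (x i) * g (drop_coord i x)) = 0.
Proof.
move=> vh0; pose G c (y : {ffun 'I_k -> A}) :=
  (v i c * h c) * ((\prod_j v (lift i j) (y j)) * g y).
rewrite /contract (eq_bigr (fun x : {ffun _} => G (x i) (drop_coord i x))).
  by rewrite sum_split_coord -big_distrlr /= -/(dot (v i) h) vh0 mul0r.
by move=> x _; rewrite (prod_split_coord i) mulrACA.
Qed.

Lemma contract_sum_slices v r (ic : 'I_r -> 'I_k.+1) (hh : 'I_r -> A -> F)
    (gg : 'I_r -> {ffun 'I_k -> A} -> F) :
    (forall j, dot (v (ic j)) (hh j) = 0) ->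
  contract v (fun x => \sum_j hh j (x (ic j)) * gg j (drop_coord (ic j) x))
    = 0.
Proof.
move=> vh0; rewrite /contract; under eq_bigr do rewrite mulr_sumr.
rewrite exchange_big big1 // => j _.
exact: (contract_slice_eq0 (gg j) (vh0 j)).
Qed.

End Contraction.

Section SliceRankBound.
Variables (F : fieldType) (d : Order.disp_t) (A : finOrderType d) (k : nat).
Variable f : {ffun 'I_k.+1 -> A} -> F.
Hypothesis k_gt0 : (0 < k)%N.
Hypothesis f_supp : forall x i, f x != 0 -> (x ord0 <= x i <= x ord_max)%O.

Lemma contract_diag (v : 'I_k.+1 -> A -> F) a :
    (forall i, v i a = 1) ->
    (forall b, v ord0 b != 0 -> (a <= b)%O) ->
    (forall b, v ord_max b != 0 -> (b <= a)%O) ->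
  contract v f = f [ffun _ => a].
Proof.
move=> v_a v0_supp vmax_supp; rewrite /contract (bigD1 [ffun _ => a]) //=.
rewrite [X in _ + X]big1 => [|x x_neq].
  by rewrite addr0 big1 ?mul1r // => i _; rewrite ffunE.
have [l /eqP vl0|v_nz] := pickP (fun l => v l (x l) == 0).
  by rewrite (bigD1 l) //= vl0 !mul0r.
have [->|fx_nz] := eqVneq (f x) 0; first by rewrite mulr0.
have le_a_x0 : (a <= x ord0)%O by apply/v0_supp/negbT/v_nz.
have le_xmax_a : (x ord_max <= a)%O by apply/vmax_supp/negbT/v_nz.
case/eqP: x_neq; apply/ffunP => l; rewrite ffunE.
have /andP[le_x0_xl le_xl_xmax] := f_supp l fx_nz.
by apply: le_anti; rewrite (le_trans le_xl_xmax) ?(le_trans le_a_x0).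
Qed.

Definition coord_order (i : 'I_k.+1) : rel A :=
  fun a b => if i == ord_max then (b <= a)%O else (a <= b)%O.

Lemma coord_order_total i :
  [/\ transitive (coord_order i), antisymmetric (coord_order i)
    & total (coord_order i)].
Proof.
rewrite /coord_order; case: eqP => _; split.
- exact: ge_trans.
- exact: ge_anti.
- exact: ge_total.
- exact: le_trans.
- exact: le_anti.
- exact: le_total.
Qed.

Lemma card_diag_support_le r (ic : 'I_r -> 'I_k.+1) (hh : 'I_r -> A -> F)
    (gg : 'I_r -> {ffun 'I_k -> A} -> F) :
    (forall x, f x = \sum_j hh j (x (ic j)) * gg j (drop_coord (ic j) x)) ->
  (#|[set a | f [ffun _ => a] != 0%R]| <= r)%N.
Proof.
move=> f_eq; pose hs i := [seq hh j | j in [pred j | ic j == i]].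
have /fin_all_exists[Bw Bw_spec] : forall i,
    exists Bw : {set A} * (A -> A -> F), (#|Bw.1| <= size (hs i))%N /\
    {in ~: Bw.1, forall a, lead_annihilator (coord_order i) (hs i) a (Bw.2 a)}.
  move=> i; have [tr asym tot] := coord_order_total i.
  have [B [w Bw]] := exists_lead_annihilators tr asym tot (hs i).
  by exists (B, w).
have card_B : (#|\bigcup_i (Bw i).1| <= r)%N.
  apply: leq_trans (card_bigcup_le _) _.
  rewrite -[X in (_ <= X)%N]card_ord -sum1_card (partition_big ic predT) //=.
  apply: leq_sum => i _; rewrite sum1_card.
  by apply: leq_trans (Bw_spec i).1 _; rewrite size_image.
have [/subset_leq_card S_le|/subsetPn[a aS a_notB]] :=
  boolP ([set a | f [ffun _ => a] != 0] \subset \bigcup_i (Bw i).1).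
  exact: leq_trans S_le card_B.
pose v i := (Bw i).2 a.
have lead i : lead_annihilator (coord_order i) (hs i) a (v i).
  apply: (Bw_spec i).2; rewrite inE; apply: contra a_notB => aB.
  by apply/bigcupP; exists i.
have : contract v f = 0.
  rewrite (eq_contract v f_eq).
  apply: contract_sum_slices => j; have [_ _ ann] := lead (ic j).
  by apply: (annihilates_map ann); rewrite mem_enum inE.
have ord0_neq_max : ord0 != ord_max :> 'I_k.+1.
  by rewrite -val_eqE /= eq_sym -lt0n.
rewrite (contract_diag (v := v) (a := a)).
- by move/eqP; rewrite inE in aS; rewrite (negbTE aS).
- by move=> i; case: (lead i).
- by case: (lead ord0); rewrite /coord_order (negbTE ord0_neq_max).
- by case: (lead ord_max); rewrite /coord_order eqxx.
Qed.

End SliceRankBound.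

Theorem lemma2 (F : fieldType) (d : Order.disp_t) (A : finOrderType d)
    (k : nat) (hk : (2 <= k)%N) (f : {ffun 'I_k -> A} -> F) :
  (forall (x : {ffun 'I_k -> A}) (i ifirst ilast : 'I_k),
     val ifirst = 0%N -> val ilast = k.-1 -> f x != 0 ->
     (x ifirst <= x i <= x ilast)%O) ->
  slice_rank_ge f #|[set a : A | f [ffun _ => a] != 0]|.
Proof.
case: k => [|k] in hk f *; first by [].
move=> f_supp r /slice_decomp_sum[ic [hh [gg f_eq]]].
apply: (card_diag_support_le hk _ f_eq) => x i.
exact: f_supp x i ord0 ord_max erefl erefl.
Qed.
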